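(* Let $0 \le m < n$, let $L$ be an $m$-dimensional affine subspace of $\mathbb{R}^n$, and let $\varepsilon > 0$. Then there exists an embedding $\psi\colon \mathbb{R}^n \setminus L \to \mathbb{R}^n \setminus L$ such that (1) $\psi^{-1}\colon \psi(\mathbb{R}^n\setminus L) \to \mathbb{R}^n \setminus L$ is uniformly continuous; (2) $|\psi(x) - x| < \varepsilon$ for all $x \in \mathbb{R}^n \setminus L$; (3) the closure of $\psi(\mathbb{R}^n \setminus L)$ in $\mathbb{R}^n$ is disjoint from $L$. *)

From Stdlib Require Import Reals.
From mathcomp Require Import all_boot.


Definition Rn (n : nat) : Type := 'I_n -> R.

Definition edist (n : nat) (x y : Rn n) : R :=
  sqrt (\big[Rplus/R0]_(i < n) (Rmult (Rminus (x i) (y i)) (Rminus (x i) (y i)))).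

Definition affine_subspace (n m : nat) (L : Rn n -> Prop) : Prop :=
  exists (p : Rn n) (v : 'I_m -> Rn n),
    (forall t : 'I_m -> R,
        (forall i : 'I_n, \big[Rplus/R0]_(j < m) (Rmult (t j) (v j i)) = R0) ->
        forall j, t j = R0) /\
    (forall x : Rn n,
        L x <-> exists t : 'I_m -> R,
            forall i : 'I_n, x i = Rplus (p i) (\big[Rplus/R0]_(j < m) (Rmult (t j) (v j i)))).
Arguments edist {n} x y.

(* Push every point of R^n \ L away from L by eps/2 along the perpendicular
   through it: psi x = x + (eps/2) w / |w|, where w is the component of x - p
   orthogonal to L.  Then |psi x - x| = eps/2 and psi x lies at distance
   |w| + eps/2 >= eps/2 from L; since psi keeps the direction w / |w| and
   only shifts the radius |w|, it is injective.  The key estimate compares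
   unit vectors: |w1/r1 - w2/r2|^2 r1 r2 <= |w1 - w2|^2.  Applied to the
   pushed points, whose radii are >= eps/2, it yields |x - y| <= 2|psi x - psi y|
   (uniform continuity of the inverse); applied near a fixed x of radius r,
   where all radii stay >= r/2, it makes psi locally Lipschitz. *)

From Stdlib Require Import Reals FunctionalExtensionality.
From mathcomp Require Import all_boot all_order all_algebra.
From mathcomp Require Import Rstruct lra ring.
Import GRing.Theory Num.Theory Order.TTheory.
Set Implicit Arguments. Unset Strict Implicit. Unset Printing Implicit Defensive.
Local Open Scope ring_scope.

Section DotProduct.
Variable R : realFieldType.

Definition dotmx n (u v : 'rV[R]_n) : R := \sum_(i < n) u 0 i * v 0 i.
Definition sqnorm n (u : 'rV[R]_n) : R := dotmx u u.

Variable n : nat.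
Implicit Types (u v w a b : 'rV[R]_n) (al be : R).

Lemma dotmxC u v : dotmx u v = dotmx v u.
Proof. by apply: eq_bigr => i _; rewrite mulrC. Qed.

Lemma dotmxDl u v w : dotmx (u + v) w = dotmx u w + dotmx v w.
Proof. by rewrite /dotmx -big_split; apply: eq_bigr => i _; rewrite mxE mulrDl. Qed.

Lemma dotmxZl al u w : dotmx (al *: u) w = al * dotmx u w.
Proof. by rewrite /dotmx mulr_sumr; apply: eq_bigr => i _; rewrite mxE mulrA. Qed.

Lemma dotmxNl u w : dotmx (- u) w = - dotmx u w.
Proof. by rewrite -scaleN1r dotmxZl mulN1r. Qed.

Lemma dotmxDr u v w : dotmx w (u + v) = dotmx w u + dotmx w v.
Proof. by rewrite dotmxC dotmxDl !(dotmxC w). Qed.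

Lemma dotmxZr al u w : dotmx w (al *: u) = al * dotmx w u.
Proof. by rewrite dotmxC dotmxZl dotmxC. Qed.

Lemma dotmxNr u w : dotmx w (- u) = - dotmx w u.
Proof. by rewrite dotmxC dotmxNl dotmxC. Qed.

Lemma dotmxE u v : dotmx u v = (u *m v^T) 0 0.
Proof. by rewrite mxE; apply: eq_bigr => i _; rewrite mxE. Qed.

Lemma sqnorm_ge0 u : 0 <= sqnorm u.
Proof. by apply: sumr_ge0 => i _; rewrite -expr2 sqr_ge0. Qed.

Lemma sqnorm_eq0 u : (sqnorm u == 0) = (u == 0).
Proof.
apply/idP/eqP => [/eqP u0 | ->]; last first.
  by rewrite /sqnorm /dotmx big1 // => i _; rewrite mxE mul0r.
apply/rowP => i; rewrite mxE.
have sum_sqr : \sum_(j < n) u 0 j ^+ 2 = sqnorm u.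
  by apply: eq_bigr => j _; rewrite expr2.
rewrite u0 in sum_sqr.
have /eqP := @psumr_eq0P _ _ predT _ (fun j _ => sqr_ge0 (u 0 j)) sum_sqr i isT.
by rewrite sqrf_eq0 => /eqP.
Qed.

Lemma sqnorm_gt0 u : (0 < sqnorm u) = (u != 0).
Proof. by rewrite lt_def sqnorm_eq0 sqnorm_ge0 andbT. Qed.

Lemma sqnormZ al u : sqnorm (al *: u) = al ^+ 2 * sqnorm u.
Proof. by rewrite /sqnorm dotmxZl dotmxZr mulrA expr2. Qed.

Lemma sqnormD u v : sqnorm (u + v) = sqnorm u + sqnorm v + 2 * dotmx u v.
Proof. by rewrite /sqnorm dotmxDl !dotmxDr (dotmxC v u); ring. Qed.

Lemma sqnormB u v : sqnorm (u - v) = sqnorm u + sqnorm v - 2 * dotmx u v.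
Proof. by rewrite sqnormD /sqnorm !dotmxNl !dotmxNr; ring. Qed.

Lemma sqnormD_le u v : sqnorm (u + v) <= 2 * sqnorm u + 2 * sqnorm v.
Proof.
have := sqnorm_ge0 (u - v).
rewrite sqnormB sqnormD; lra.
Qed.

Section NormalizedDifference.
Variables (a b : 'rV[R]_n) (al be : R).
Hypotheses (al_gt0 : 0 < al) (be_gt0 : 0 < be).
Hypotheses (sqnorm_a : sqnorm a = al ^+ 2) (sqnorm_b : sqnorm b = be ^+ 2).

Lemma sqnorm_normalizedB :
  sqnorm (al^-1 *: a - be^-1 *: b) * (al * be) = 2 * al * be - 2 * dotmx a b.
Proof.
rewrite sqnormB !sqnormZ dotmxZl dotmxZr sqnorm_a sqnorm_b.
by field; rewrite !lt0r_neq0.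
Qed.

Lemma sqnorm_normalizedB_le :
  sqnorm (al^-1 *: a - be^-1 *: b) * (al * be) <= sqnorm (a - b).
Proof.
rewrite sqnorm_normalizedB sqnormB sqnorm_a sqnorm_b.
have := sqr_ge0 (al - be); lra.
Qed.

Lemma sqrB_le_sqnormB : (al - be) ^+ 2 <= sqnorm (a - b).
Proof.
have := sqnorm_normalizedB; rewrite sqnormB sqnorm_a sqnorm_b.
have : 0 <= sqnorm (al^-1 *: a - be^-1 *: b) * (al * be).
  by rewrite mulr_ge0 ?sqnorm_ge0 // mulr_ge0 // ltW.
lra.
Qed.

End NormalizedDifference.
End DotProduct.

Section OrthogonalProjection.
Variables (R : realFieldType) (m n : nat) (V : 'M[R]_(m, n)).
Hypothesis V_free : row_free V.

Lemma gram_unit : V *m V^T \in unitmx.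
Proof.
rewrite -row_free_unit -kermx_eq0; apply/eqP/row_matrixP => i; rewrite row0.
set t := row i _.
have tG0 : t *m (V *m V^T) = 0 by apply/sub_kermxP; exact: row_sub.
apply: (row_free_inj V_free); rewrite mul0mx; apply/eqP.
by rewrite -sqnorm_eq0 /sqnorm dotmxE trmx_mul mulmxA -(mulmxA t) tG0 mul0mx mxE.
Qed.

Definition orthproj : 'M[R]_n := 1%:M - V^T *m invmx (V *m V^T) *m V.

Lemma row_mul_orthproj (T : 'rV_m) : T *m V *m orthproj = 0.
Proof.
rewrite /orthproj mulmxBr mulmx1 !mulmxA -(mulmxA T V).
by rewrite -(mulmxA T) (mulmxV gram_unit) mulmx1 subrr.
Qed.

Lemma orthproj_mul_tr : orthproj *m V^T = 0.
Proof.
by rewrite /orthproj mulmxBl mul1mx -!mulmxA (mulVmx gram_unit) mulmx1 subrr.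
Qed.

Lemma subr_orthproj (u : 'rV_n) :
  u - u *m orthproj = (u *m V^T *m invmx (V *m V^T)) *m V.
Proof. by rewrite /orthproj mulmxBr mulmx1 opprB addrC subrK !mulmxA. Qed.

Lemma orthproj_idem (u : 'rV_n) : u *m orthproj *m orthproj = u *m orthproj.
Proof.
have uP : u *m orthproj = u - (u *m V^T *m invmx (V *m V^T)) *m V.
  by rewrite -subr_orthproj opprB addrC subrK.
by rewrite {1}uP mulmxBl row_mul_orthproj subr0.
Qed.

Lemma dotmx_orthproj_row (u : 'rV_n) (T : 'rV_m) :
  dotmx (u *m orthproj) (T *m V) = 0.
Proof.
rewrite dotmxE trmx_mul -!mulmxA (mulmxA orthproj) orthproj_mul_tr.
by rewrite mul0mx mulmx0 mxE.
Qed.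

Lemma sqnorm_orthproj_le (u : 'rV_n) : sqnorm (u *m orthproj) <= sqnorm u.
Proof.
have {2}-> : u = u *m orthproj + (u *m V^T *m invmx (V *m V^T)) *m V.
  by rewrite -subr_orthproj addrC subrK.
by rewrite sqnormD dotmx_orthproj_row mulr0 addr0 lerDl sqnorm_ge0.
Qed.

Lemma orthproj_eq0 (u : 'rV_n) :
  u *m orthproj = 0 <-> exists T : 'rV_m, u = T *m V.
Proof.
split=> [u0 | [T ->]]; last exact: row_mul_orthproj.
by exists (u *m V^T *m invmx (V *m V^T)); rewrite -subr_orthproj u0 subr0.
Qed.

End OrthogonalProjection.

Section EuclideanNorm.
Variable R : rcfType.

Definition vnorm n (u : 'rV[R]_n) : R := Num.sqrt (sqnorm u).

Variable n : nat.
Implicit Types (u v : 'rV[R]_n) (e k : R).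

Lemma sqr_vnorm u : vnorm u ^+ 2 = sqnorm u.
Proof. by rewrite sqr_sqrtr // sqnorm_ge0. Qed.

Lemma vnorm_gt0 u : (0 < vnorm u) = (u != 0).
Proof. by rewrite sqrtr_gt0 sqnorm_gt0. Qed.

Lemma vnorm_ltE u e : 0 < e -> (vnorm u < e) = (sqnorm u < e ^+ 2).
Proof.
by move=> e_gt0; rewrite -[RHS]ltr_sqrt ?exprn_gt0 // sqrtr_sqr gtr0_norm.
Qed.

Lemma vnorm_geE u e : 0 <= e -> (e <= vnorm u) = (e ^+ 2 <= sqnorm u).
Proof.
by move=> e_ge0; rewrite -[RHS]ler_sqrt ?sqnorm_ge0 // sqrtr_sqr ger0_norm.
Qed.

Lemma vnorm_eq u e : 0 <= e -> sqnorm u = e ^+ 2 -> vnorm u = e.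
Proof. by move=> e_ge0 u_e; rewrite /vnorm u_e sqrtr_sqr ger0_norm. Qed.

Lemma vnorm_le_scale u v k :
  0 <= k -> sqnorm u <= k ^+ 2 * sqnorm v -> vnorm u <= k * vnorm v.
Proof.
move=> k_ge0 uv; rewrite -(ger0_norm k_ge0) -sqrtr_sqr -sqrtrM ?sqr_ge0 //.
by rewrite ler_sqrt // mulr_ge0 ?sqr_ge0 ?sqnorm_ge0.
Qed.

End EuclideanNorm.

Section RadialPush.
Variables (R : rcfType) (m n : nat) (V : 'M[R]_(m, n)) (P : 'rV[R]_n) (c : R).
Hypotheses (V_free : row_free V) (c_gt0 : 0 < c).
Implicit Types X Y : 'rV[R]_n.

(* The vector from the affine subspace P + rowspace V to X that is
   perpendicular to it. *)
Definition offset X := (X - P) *m orthproj V.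
Definition distL X := vnorm (offset X).
Definition push X := X + (c / distL X) *: offset X.

Lemma offsetB X Y : offset X - offset Y = (X - Y) *m orthproj V.
Proof. by rewrite /offset -mulmxBl opprB addrA subrK. Qed.

Lemma distL_gt0 X : offset X != 0 -> 0 < distL X.
Proof. by rewrite -vnorm_gt0. Qed.

Lemma offset_push X : offset (push X) = (1 + c / distL X) *: offset X.
Proof.
rewrite /push {1}/offset addrAC mulmxDl -scalemxAl orthproj_idem //.
by rewrite scalerDl scale1r.
Qed.

Lemma distL_push X : offset X != 0 -> distL (push X) = distL X + c.
Proof.
move=> X0; have dX_gt0 := distL_gt0 X0.
rewrite /distL offset_push; apply: vnorm_eq; first by rewrite addr_ge0 // ltW.
by rewrite sqnormZ -sqr_vnorm -/(distL X); field; rewrite lt0r_neq0.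
Qed.

Lemma offset_push_neq0 X : offset X != 0 -> offset (push X) != 0.
Proof.
by move=> X0; rewrite -vnorm_gt0 -/(distL _) distL_push // addr_gt0 ?distL_gt0.
Qed.

Lemma normalized_offset_push X : offset X != 0 ->
  (distL (push X))^-1 *: offset (push X) = (distL X)^-1 *: offset X.
Proof.
move=> X0; have dX_gt0 := distL_gt0 X0.
rewrite distL_push // offset_push scalerA; congr (_ *: _).
by field; rewrite !lt0r_neq0 ?addr_gt0.
Qed.

Lemma push_inj X Y : offset X != 0 -> offset Y != 0 -> push X = push Y -> X = Y.
Proof.
move=> X0 Y0 pushXY.
have dXY : distL X = distL Y by apply: (addIr c); rewrite -!distL_push // pushXY.
have oXY : offset X = offset Y.
  apply: (scalerI (invr_neq0 (lt0r_neq0 (distL_gt0 X0)))).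
  by rewrite -normalized_offset_push // pushXY normalized_offset_push // dXY.
by move: pushXY; rewrite /push dXY oXY => /addIr.
Qed.

Lemma vnorm_push_sub X : offset X != 0 -> vnorm (push X - X) = c.
Proof.
move=> X0; have dX_gt0 := distL_gt0 X0.
rewrite /push addrAC subrr add0r; apply: vnorm_eq; first exact: ltW.
by rewrite sqnormZ -sqr_vnorm -/(distL X); field; rewrite lt0r_neq0.
Qed.

Lemma push_far X Y : offset X != 0 -> offset Y = 0 -> c <= vnorm (push X - Y).
Proof.
move=> X0 Y0; have dX_gt0 := distL_gt0 X0.
rewrite vnorm_geE ?(ltW c_gt0) //.
have := sqnorm_orthproj_le V_free (push X - Y).
rewrite -offsetB Y0 subr0 -sqr_vnorm -/(distL _) distL_push //.
have := mulr_gt0 dX_gt0 c_gt0; nra.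
Qed.

Lemma sqnormB_le_push X Y : offset X != 0 -> offset Y != 0 ->
  sqnorm (X - Y) <= 4 * sqnorm (push X - push Y).
Proof.
move=> X0 Y0; have dX_gt0 := distL_gt0 X0; have dY_gt0 := distL_gt0 Y0.
set E := sqnorm (push X - push Y).
set d := (distL X)^-1 *: offset X - (distL Y)^-1 *: offset Y.
have d_le : sqnorm d * (distL (push X) * distL (push Y)) <= E.
  rewrite /d -(normalized_offset_push X0) -(normalized_offset_push Y0).
  apply: le_trans (sqnorm_normalizedB_le
    (distL_gt0 (offset_push_neq0 X0)) (distL_gt0 (offset_push_neq0 Y0))
    (esym (sqr_vnorm _)) (esym (sqr_vnorm _))) _.
  by rewrite offsetB sqnorm_orthproj_le.
rewrite !distL_push // in d_le.
have XY_E : X - Y = (push X - push Y) + (- c) *: d.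
  by rewrite /d /push; apply/rowP => i; rewrite !mxE; ring.
have := sqnormD_le (push X - push Y) ((- c) *: d).
rewrite -XY_E sqnormZ -/E sqrrN.
have := sqnorm_ge0 d.
have : c ^+ 2 <= (distL X + c) * (distL Y + c).
  by rewrite expr2 ler_pM ?(ltW c_gt0) // lerDr ltW.
nra.
Qed.

Lemma vnormB_le_push X Y : offset X != 0 -> offset Y != 0 ->
  vnorm (X - Y) <= 2 * vnorm (push X - push Y).
Proof.
move=> X0 Y0; apply: vnorm_le_scale => //.
by rewrite (_ : 2 ^+ 2 = 4) ?sqnormB_le_push //; rewrite expr2 -natrM.
Qed.

Lemma sqnorm_pushB_le X Y : offset X != 0 -> offset Y != 0 ->
  sqnorm (Y - X) < (distL X / 2) ^+ 2 ->
  sqnorm (push Y - push X) <= (2 + 4 * c ^+ 2 / distL X ^+ 2) * sqnorm (Y - X).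
Proof.
move=> X0 Y0 YX_small.
have dX_gt0 := distL_gt0 X0; have dY_gt0 := distL_gt0 Y0.
set D := sqnorm (Y - X) in YX_small *.
have offset_le : sqnorm (offset Y - offset X) <= D.
  by rewrite offsetB sqnorm_orthproj_le.
have dY_ge : distL X / 2 <= distL Y.
  have := le_trans (sqrB_le_sqnormB dY_gt0 dX_gt0
    (esym (sqr_vnorm _)) (esym (sqr_vnorm _))) offset_le.
  move=> dYX; have : (distL Y - distL X) ^+ 2 < (distL X / 2) ^+ 2 by lra.
  nra.
set d := (distL Y)^-1 *: offset Y - (distL X)^-1 *: offset X.
have d_le : sqnorm d * (distL Y * distL X) <= D.
  apply: le_trans offset_le.
  exact: sqnorm_normalizedB_le dY_gt0 dX_gt0
    (esym (sqr_vnorm _)) (esym (sqr_vnorm _)).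
have sqnorm_d_le : sqnorm d <= 2 * D / distL X ^+ 2.
  rewrite ler_pdivlMr ?exprn_gt0 //.
  have : 0 <= sqnorm d * distL X * (distL Y - distL X / 2).
    by rewrite !mulr_ge0 ?sqnorm_ge0 ?subr_ge0 // ltW.
  nra.
have pushYX_E : push Y - push X = (Y - X) + c *: d.
  by rewrite /push /d; apply/rowP => i; rewrite !mxE; ring.
have := sqnormD_le (Y - X) (c *: d); rewrite -pushYX_E sqnormZ -/D.
have -> : (2 + 4 * c ^+ 2 / distL X ^+ 2) * D =
          2 * D + 2 * c ^+ 2 * (2 * D / distL X ^+ 2).
  by field; rewrite lt0r_neq0.
have := sqr_ge0 c; nra.
Qed.

Lemma push_lipschitz_near X Y : offset X != 0 -> offset Y != 0 ->
  vnorm (Y - X) < distL X / 2 ->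
  vnorm (push Y - push X) <= (2 + 2 * (c / distL X)) * vnorm (Y - X).
Proof.
move=> X0 Y0 YX_near; have dX_gt0 := distL_gt0 X0.
have t_ge0 : 0 <= c / distL X by rewrite divr_ge0 // ltW.
apply: vnorm_le_scale; first by rewrite addr_ge0 // mulr_ge0.
apply: le_trans (sqnorm_pushB_le X0 Y0 _) _.
  by rewrite -vnorm_ltE // divr_gt0.
apply: ler_wpM2r; first exact: sqnorm_ge0.
rewrite (_ : 4 * c ^+ 2 / distL X ^+ 2 = 4 * (c / distL X) ^+ 2); last first.
  by field; rewrite lt0r_neq0.
nra.
Qed.

Lemma push_continuous X : offset X != 0 -> forall e, 0 < e ->
  exists2 d, 0 < d & forall Y, offset Y != 0 ->
    vnorm (Y - X) < d -> vnorm (push Y - push X) < e.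
Proof.
move=> X0 e e_gt0; have dX_gt0 := distL_gt0 X0.
set K := 2 + 2 * (c / distL X).
have K_gt0 : 0 < K by rewrite ltr_wpDr // mulr_ge0 // divr_ge0 // ltW.
exists (Num.min (distL X / 2) (e / K)); first by rewrite lt_min !divr_gt0.
move=> Y Y0; rewrite lt_min => /andP[YX_near].
rewrite ltr_pdivlMr // => YX_small.
by apply: le_lt_trans (push_lipschitz_near X0 Y0 YX_near) _; rewrite mulrC.
Qed.

End RadialPush.

Definition rowRn n (x : Rn n) : 'rV[R]_n := \row_i x i.

Lemma rowRn_inj n : injective (@rowRn n).
Proof.
move=> x y xy; apply: functional_extensionality => i.
by have := congr1 (fun u : 'rV[R]_n => u 0 i) xy; rewrite !mxE.
Qed.

Lemma edistE n (x y : Rn n) : edist x y = vnorm (rowRn x - rowRn y).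
Proof.
rewrite /edist RsqrtE /vnorm /sqnorm /dotmx; congr Num.sqrt.
by apply: eq_bigr => i _; rewrite !mxE.
Qed.

Lemma affine_subspace_orthproj n m (L : Rn n -> Prop) :
  affine_subspace n m L ->
  exists (V : 'M[R]_(m, n)) (P : 'rV[R]_n),
    row_free V /\ forall x, L x <-> (rowRn x - P) *m orthproj V = 0.
Proof.
case=> p [v [v_indep L_E]].
pose V := \matrix_(j < m, i < n) v j i.
have V_free : row_free V.
  rewrite -kermx_eq0; apply/eqP/row_matrixP => k; rewrite row0.
  set t := row k _.
  have tV0 : t *m V = 0 by apply/sub_kermxP; exact: row_sub.
  apply/rowP => j; rewrite [RHS]mxE; apply: (v_indep (fun l => t 0 l)) => i.
  have := congr1 (fun u : 'rV[R]_n => u 0 i) tV0; rewrite !mxE => tV0i.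
  by apply: etrans _ tV0i; apply: eq_bigr => l _; rewrite [V _ _]mxE.
exists V, (rowRn p); split=> // x.
rewrite L_E orthproj_eq0 //; split=> [[t xE] | [T xE]].
  exists (\row_j t j); apply/rowP => i; rewrite !mxE xE addrAC subrr add0r.
  by apply: eq_bigr => l _; rewrite !mxE.
exists (fun j => T 0 j) => i.
have := congr1 (fun u : 'rV[R]_n => u 0 i) xE; rewrite !mxE => xiE.
rewrite -[x i](subrK (p i)) xiE addrC; congr (_ + _).
by apply: eq_bigr => l _; rewrite [V _ _]mxE.
Qed.

Local Close Scope ring_scope.
Open Scope R_scope.

Theorem mainTheorem5 (n m : nat) (L : Rn n -> Prop) (eps : R) :
  (m < n)%N ->
  affine_subspace n m L ->
  0 < eps ->
  exists psi : Rn n -> Rn n,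
    (* psi maps R^n \ L into R^n \ L *)
    (forall x, ~ L x -> ~ L (psi x)) /\
    (* psi is continuous on R^n \ L *)
    (forall x, ~ L x -> forall e, 0 < e -> exists d, 0 < d /\
        forall y, ~ L y -> edist y x < d -> edist (psi y) (psi x) < e) /\
    (* psi is injective on R^n \ L *)
    (forall x y, ~ L x -> ~ L y -> psi x = psi y -> x = y) /\
    (* (1) psi^{-1} : psi(R^n \ L) -> R^n \ L is uniformly continuous
       (in particular continuous, so psi is an embedding) *)
    (forall e, 0 < e -> exists d, 0 < d /\
        forall x y, ~ L x -> ~ L y ->
          edist (psi x) (psi y) < d -> edist x y < e) /\
    (* (2) |psi x - x| < eps *)
    (forall x, ~ L x -> edist (psi x) x < eps) /\
    (* (3) closure of psi(R^n \ L) is disjoint from L *)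
    (forall y, L y -> exists r, 0 < r /\
        forall x, ~ L x -> r <= edist (psi x) y).
Proof.
move=> _ /affine_subspace_orthproj [V [P [V_free L_E]]] eps_gt0.
have {}eps_gt0 : (0 < eps)%R by exact/RltP.
pose c := (eps / 2)%R.
have c_gt0 : (0 < c)%R by rewrite divr_gt0.
pose psi x i := push V P c (rowRn x) ord0 i.
have rowRn_psi x : rowRn (psi x) = push V P c (rowRn x).
  by apply/rowP => i; rewrite mxE.
have offset_neq0 x : ~ L x -> (offset V P (rowRn x) != 0)%R.
  by rewrite L_E => /eqP.
exists psi; split; [|split; [|split; [|split; [|split]]]].
- move=> x /offset_neq0 x0; rewrite L_E rowRn_psi; apply/eqP.
  exact: offset_push_neq0.
- move=> x /offset_neq0 x0 e /RltP e_gt0.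
  have [d d_gt0 dP] := push_continuous V_free c_gt0 x0 e_gt0.
  exists d; split=> [|y /offset_neq0 y0]; first exact/RltP.
  by rewrite !edistE !rowRn_psi => /RltP yx_d; apply/RltP; exact: dP.
- move=> x y /offset_neq0 x0 /offset_neq0 y0 psi_xy; apply: rowRn_inj.
  by apply: (push_inj V_free c_gt0 x0 y0); rewrite -!rowRn_psi psi_xy.
- move=> e /RltP e_gt0; exists (e / 2)%R.
  split=> [|x y /offset_neq0 x0 /offset_neq0 y0]; first by apply/RltP; rewrite divr_gt0.
  rewrite !edistE !rowRn_psi => /RltP psi_xy; apply/RltP.
  have := vnormB_le_push V_free c_gt0 x0 y0; lra.
- move=> x /offset_neq0 x0; apply/RltP.
  rewrite edistE rowRn_psi vnorm_push_sub // /c; lra.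
- move=> y /L_E y0; exists c; split=> [|x /offset_neq0 x0]; first exact/RltP.
  by apply/RleP; rewrite edistE rowRn_psi push_far.
Qed.
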